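(* Let $\alpha\in(0,\frac{\pi}{2}]$ and let $S$ be a finite set of line segments in the plane such that any two segments of $S$ that cross do so at angle $\alpha$. Then there exists a subset $S'\subset S$ of pairwise noncrossing segments with $|S'|\geq|S|/3$.
   Context: Segments in $S$ may overlap. Two segments cross if they intersect in a single point lying in the relative interior of both (alternatively, given a set $V$ of segment endpoints, if they intersect in a single point not in $V$). Two segments cross at angle $\alpha$ if the lines containing them meet at angle $\alpha$ (equivalently $\pi-\alpha$). *)

From HB Require Import structures.
From mathcomp Require Import all_boot all_order all_algebra.
From mathcomp Require Import all_classical all_reals.
From mathcomp Require Import trigo.
Set Implicit Arguments. Unset Strict Implicit. Unset Printing Implicit Defensive.
Import Order.TTheory GRing.Theory Num.Theory.
Local Open Scope ring_scope.
Local Open Scope classical_set_scope.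

Section Geom.
Variable R : realType.

Definition point := (R * R)%type.
Definition segment := (point * point)%type.

Definition seg_pt (s : segment) (t : R) : point :=
  ((1 - t) * s.1.1 + t * s.2.1, (1 - t) * s.1.2 + t * s.2.2).

Definition seg_set (s : segment) : set point :=
  [set x | exists t, 0 <= t <= 1 /\ x = seg_pt s t].

Definition seg_relint (s : segment) : set point :=
  [set x | exists t, 0 < t < 1 /\ x = seg_pt s t].

Definition crosses (s s' : segment) : Prop :=
  exists x, seg_set s `&` seg_set s' = [set x] /\ seg_relint s x /\ seg_relint s' x.

Definition dir (s : segment) : point := (s.2.1 - s.1.1, s.2.2 - s.1.2).

Definition vnorm (u : point) : R := Num.sqrt (u.1 ^+ 2 + u.2 ^+ 2).

(* angle in [0, pi/2] between the lines containing s and s' *)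
Definition line_angle (s s' : segment) : R :=
  acos (`|(dir s).1 * (dir s').1 + (dir s).2 * (dir s').2|
        / (vnorm (dir s) * vnorm (dir s'))).

Definition crosses_at (alpha : R) (s s' : segment) : Prop :=
  crosses s s' /\ (line_angle s s' = alpha \/ line_angle s s' = pi - alpha).

Definition same_segment (s s' : segment) : Prop :=
  (s.1 = s'.1 /\ s.2 = s'.2) \/ (s.1 = s'.2 /\ s.2 = s'.1).

End Geom.

From mathcomp Require Import all_boot all_order all_algebra.
From mathcomp Require Import reals trigo.
From mathcomp Require Import zify ring lra.
Set Implicit Arguments. Unset Strict Implicit. Unset Printing Implicit Defensive.
Import Order.TTheory GRing.Theory Num.Theory.

(* The direction vectors of two crossing segments are not parallel and the
   squared cosine of their angle is k = cos^2 alpha, with k <> 1.  Call such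
   directions oblique.  Obliquity only depends on the parallel classes of the
   directions, and the directions oblique to a given u fall into at most two
   classes: they are isotropic for the binary quadratic form
   w |-> (u.w)^2 - k |u|^2 |w|^2, which does not vanish at u.  Hence a largest
   parallel class K has at most 2 |K| oblique neighbours; keeping K, discarding
   those neighbours and recursing on the rest yields pairwise non-oblique, hence
   non-crossing, segments, at least a third of them. *)

Section GreedyIndependentSet.
Variables (I : finType) (P H : rel I).
Hypotheses (P_refl : reflexive P) (P_sym : symmetric P) (P_trans : transitive P).
Hypotheses (H_sym : symmetric H) (H_nP : forall i j, H i j -> ~~ P i j).
Hypothesis H_classP : forall i i' j, P i i' -> H i j -> H i' j.
Hypothesis H_two_classes :
  forall i a b c, H i a -> H i b -> H i c -> [|| P a b, P a c | P b c].

Definition pclass (T : {set I}) (i : I) : {set I} := [set k in T | P i k].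
Definition hnbhd (T : {set I}) (i : I) : {set I} := [set j in T | H i j].

Lemma hnbhd_sub_two_pclasses (T : {set I}) (i : I) : i \in T ->
  exists a b, [/\ a \in T, b \in T & hnbhd T i \subset pclass T a :|: pclass T b].
Proof.
move=> iT; have [N0 | [a aN]] := set_0Vmem (hnbhd T i).
  by exists i, i; split=> //; apply/subsetP => j; rewrite N0 in_set0.
have /andP[aT Hia] : (a \in T) && H i a by rewrite inE in aN.
have [allPa | ] := boolP [forall j in hnbhd T i, P a j].
  exists a, a; split=> //; rewrite setUid; apply/subsetP => j jN.
  by rewrite inE (forall_inP allPa j jN) andbT; move: jN; rewrite inE => /andP[].
rewrite negb_forall_in => /existsP[b /andP[bN nPab]].
have /andP[bT Hib] : (b \in T) && H i b by rewrite inE in bN.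
exists a, b; split=> //; apply/subsetP => j; rewrite inE => /andP[jT Hij].
have := H_two_classes Hia Hib Hij; rewrite (negbTE nPab) /= => /orP[] Pj;
  by rewrite !inE jT Pj ?orbT.
Qed.

Lemma card_hnbhd_le_pclass_max (T : {set I}) (i : I) :
  i \in T -> (forall j, j \in T -> #|pclass T j| <= #|pclass T i|) ->
  #|hnbhd T i| <= 2 * #|pclass T i|.
Proof.
move=> iT imax; have [a [b [aT bT Nab]]] := hnbhd_sub_two_pclasses iT.
apply: leq_trans (subset_leq_card Nab) _; apply: leq_trans (leq_card_setU _ _) _.
by have := imax a aT; have := imax b bT; lia.
Qed.

Definition independent (S : {set I}) : Prop :=
  forall i j, i \in S -> j \in S -> ~~ H i j.

Lemma greedy_independent (T : {set I}) :
  exists S : {set I}, [/\ S \subset T, independent S & #|T| <= 3 * #|S|].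
Proof.
have [n] := ubnP #|T|; elim: n T => // n IH T /ltnSE leTn.
have [T0 | [i0 i0T]] := set_0Vmem T.
  by exists T; rewrite subxx T0 cards0; split=> // ? ?; rewrite in_set0.
have [i iT imax] := arg_maxnP (fun j => #|pclass T j|) i0T.
have {}iT : i \in T := iT.
set K := pclass T i; set N := hnbhd T i; set Rest := T :\: (K :|: N).
have iK : i \in K by rewrite !inE P_refl andbT.
have KT : K \subset T by apply/subsetP => k; rewrite inE => /andP[].
have NT : N \subset T by apply/subsetP => k; rewrite inE => /andP[].
have [|S0 [S0Rest S0ind S0card]] := IH Rest.
  apply: leq_trans leTn; apply: proper_card; apply/properP.
  by split; [exact: subsetDl | exists i; rewrite // in_setD in_setU iK].
have S0_notKN j : j \in S0 -> [/\ j \in T, j \notin K & j \notin N].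
  by move/(subsetP S0Rest); rewrite !inE negb_or => /andP[/andP[-> ->] ->].
have PiK k : k \in K -> P i k by rewrite inE => /andP[].
have noH_K_S0 a b : a \in K -> b \in S0 -> ~~ H a b.
  move=> /PiK Pia /S0_notKN[bT _ bN]; apply: contra bN => Hab.
  by rewrite inE bT (H_classP _ Hab) // P_sym.
exists (K :|: S0); split.
- by rewrite subUset KT (subset_trans S0Rest) ?subsetDl.
- move=> a b; rewrite !in_setU => /orP[aK | aS0] /orP[bK | bS0].
  + apply: (contraL (@H_nP a b)); apply: (@P_trans i); last exact: PiK.
    by rewrite P_sym PiK.
  + exact: noH_K_S0.
  + by rewrite H_sym noH_K_S0.
  + exact: S0ind.
- have KS0 : [disjoint K & S0].
    by apply/pred0P => j /=; apply/negbTE/andP => -[jK /S0_notKN[_ /negP]].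
  rewrite cardsU (disjoint_setI0 KS0) cards0 subn0.
  have := cardsID (K :|: N) T; rewrite (setIidPr _) ?subUset ?KT // => <-.
  have := card_hnbhd_le_pclass_max iT imax.
  by have := cardsUI K N; move: S0card; rewrite -/K -/N -/Rest; lia.
Qed.

End GreedyIndependentSet.

Local Open Scope ring_scope.

Section PlaneVectors.
Variable R : realFieldType.
Implicit Types (k : R) (u v w : R * R).

Definition dotv u v := u.1 * v.1 + u.2 * v.2.
Definition crossv u v := u.1 * v.2 - u.2 * v.1.
Definition sqnorm u := u.1 ^+ 2 + u.2 ^+ 2.

Definition parallelv u v := crossv u v == 0.

Definition obliquev k u v :=
  ~~ parallelv u v && (dotv u v ^+ 2 == k * sqnorm u * sqnorm v).

Lemma sqnorm_ge0 u : 0 <= sqnorm u.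
Proof. by rewrite addr_ge0 ?sqr_ge0. Qed.

Lemma dotv_sqr_add_crossv_sqr u v :
  dotv u v ^+ 2 + crossv u v ^+ 2 = sqnorm u * sqnorm v.
Proof. by rewrite /dotv /crossv /sqnorm; ring. Qed.

Lemma crossvC u v : crossv v u = - crossv u v.
Proof. by rewrite /crossv; ring. Qed.

Lemma parallelv_refl : reflexive parallelv.
Proof. by move=> u; rewrite /parallelv /crossv mulrC subrr. Qed.

Lemma parallelv_sym : symmetric parallelv.
Proof. by move=> u v; rewrite /parallelv crossvC oppr_eq0. Qed.

Lemma parallelv_trans v u w :
  sqnorm v != 0 -> parallelv u v -> parallelv v w -> parallelv u w.
Proof.
rewrite /parallelv => v0 /eqP uv /eqP vw.
have : sqnorm v * crossv u w = dotv v w * crossv u v + dotv v u * crossv v w.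
  by rewrite /sqnorm /dotv /crossv; ring.
by rewrite uv vw !mulr0 addr0 => /eqP; rewrite mulf_eq0 (negbTE v0).
Qed.

Lemma obliquev_sym k : symmetric (obliquev k).
Proof.
move=> u v; rewrite /obliquev parallelv_sym /dotv (mulrC u.1) (mulrC u.2).
by rewrite -!mulrA (mulrC (sqnorm u)).
Qed.

Lemma parallelvN_dotv_sqr k u v : k != 1 -> sqnorm u != 0 -> sqnorm v != 0 ->
  dotv u v ^+ 2 = k * sqnorm u * sqnorm v -> ~~ parallelv u v.
Proof.
move=> k1 u0 v0 huv; apply/negP => /eqP uv.
have : (k - 1) * (sqnorm u * sqnorm v) = - crossv u v ^+ 2.
  by rewrite mulrBl mul1r mulrA -huv -dotv_sqr_add_crossv_sqr; ring.
rewrite uv expr0n oppr0.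
by move/eqP; rewrite !mulf_eq0 subr_eq0 (negbTE k1) (negbTE u0) (negbTE v0).
Qed.

Lemma obliquev_parallel k u u' v : sqnorm u != 0 -> sqnorm u' != 0 ->
  parallelv u u' -> obliquev k u v -> obliquev k u' v.
Proof.
move=> u0 u'0 uu' /andP[uv /eqP huv]; apply/andP; split.
  by apply: contra uv; apply: parallelv_trans.
move: uu'; rewrite /parallelv => /eqP uu'.
have : sqnorm u ^+ 2 * (dotv u' v ^+ 2 - k * sqnorm u' * sqnorm v) =
    dotv u u' ^+ 2 * (dotv u v ^+ 2 - k * sqnorm u * sqnorm v) +
    crossv u u' * (2 * dotv u u' * dotv u v * crossv u v
      + crossv u u' * crossv u v ^+ 2 - k * sqnorm u * sqnorm v * crossv u u').
  by rewrite /sqnorm /dotv /crossv; ring.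
rewrite uu' huv subrr !mulr0 mul0r addr0 => /eqP.
by rewrite mulf_eq0 expf_eq0 (negbTE u0) subr_eq0.
Qed.

Lemma obliquev_three k u a b c : k != 1 -> sqnorm u != 0 ->
  obliquev k u a -> obliquev k u b -> obliquev k u c ->
  [|| parallelv a b, parallelv a c | parallelv b c].
Proof.
move=> k1 u0 /andP[_ /eqP ha] /andP[_ /eqP hb] /andP[_ /eqP hc].
pose Q w := dotv u w ^+ 2 - k * sqnorm u * sqnorm w.
have Qu : Q u = (1 - k) * sqnorm u ^+ 2 by rewrite /Q /dotv /sqnorm; ring.
have : Q u * (crossv a b * crossv a c * crossv b c) =
    Q a * crossv u b * crossv u c * crossv b c
    - Q b * crossv u a * crossv u c * crossv a c
    + Q c * crossv u a * crossv u b * crossv a b.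
  by rewrite /Q /sqnorm /dotv /crossv; ring.
have Q0 w : dotv u w ^+ 2 = k * sqnorm u * sqnorm w -> Q w = 0.
  by move=> hw; rewrite /Q hw subrr.
rewrite (Q0 a ha) (Q0 b hb) (Q0 c hc) !mul0r subrr addr0 Qu => /eqP.
by rewrite !mulf_eq0 subr_eq0 eq_sym (negbTE k1) (negbTE u0) /= -orbA.
Qed.

End PlaneVectors.

Section LineAngle.
Variable R : realType.
Implicit Types (s : segment R).

Lemma sqnorm_dir_neq0 s : s.1 <> s.2 -> sqnorm (dir s) != 0.
Proof.
move=> s12; rewrite /sqnorm paddr_eq0 ?sqr_ge0 // !sqrf_eq0 /dir /= !subr_eq0.
apply/negP => /andP[/eqP e1 /eqP e2]; apply: s12.
by case: s e1 e2 => [[? ?] [? ?]] /= -> ->.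
Qed.

Lemma dotv_sqr_line_angle s s' : sqnorm (dir s) != 0 -> sqnorm (dir s') != 0 ->
  dotv (dir s) (dir s') ^+ 2
  = cos (line_angle s s') ^+ 2 * sqnorm (dir s) * sqnorm (dir s').
Proof.
rewrite /line_angle; set u := dir s; set v := dir s' => u0 v0.
have uv_gt0 : 0 < sqnorm u * sqnorm v by rewrite mulr_gt0 // lt0r ?u0 ?v0 sqnorm_ge0.
have uv_ge0 := ltW uv_gt0.
have -> : vnorm u * vnorm v = Num.sqrt (sqnorm u * sqnorm v).
  by rewrite sqrtrM ?sqnorm_ge0.
set x := `|dotv u v| / _.
have x_ge0 : 0 <= x by rewrite divr_ge0 ?sqrtr_ge0.
have x_le1 : x <= 1.
  rewrite ler_pdivrMr ?sqrtr_gt0 // mul1r -[ `|_| ]sqrtr_sqr ler_sqrt ?uv_ge0 //.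
  by rewrite -dotv_sqr_add_crossv_sqr lerDl sqr_ge0.
rewrite acosK; last by rewrite in_itv /= x_le1 andbT (le_trans (lerN10 _) x_ge0).
by rewrite exprMn (real_normK (num_real _)) exprVn sqr_sqrtr // -mulrA divfK ?gt_eqF.
Qed.

Lemma cos_sqr_neq1 (alpha : R) : 0 < alpha <= pi / 2 -> cos alpha ^+ 2 != 1.
Proof.
move=> /andP[a_gt0 a_le]; have sin_gt0 : 0 < sin alpha.
  by apply: sin_gt0_pi; have := @pi_gt0 R; lra.
by rewrite cos2sin2 subr_eq addrC -subr_eq subrr eq_sym sqrf_eq0 gt_eqF.
Qed.

Lemma crosses_at_obliquev (alpha : R) s s' : 0 < alpha <= pi / 2 ->
  s.1 <> s.2 -> s'.1 <> s'.2 -> crosses_at alpha s s' ->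
  obliquev (cos alpha ^+ 2) (dir s) (dir s').
Proof.
move=> ha /sqnorm_dir_neq0 s0 /sqnorm_dir_neq0 s'0 [_ angle].
have cos_sqr : cos (line_angle s s') ^+ 2 = cos alpha ^+ 2.
  by case: angle => ->; rewrite // cosB cospi sinpi mul0r addr0 mulN1r sqrrN.
have hdot := dotv_sqr_line_angle s0 s'0; rewrite cos_sqr in hdot.
by rewrite /obliquev hdot eqxx andbT (parallelvN_dotv_sqr (cos_sqr_neq1 ha)).
Qed.

End LineAngle.

Theorem corollary16 (R : realType) (alpha : R) (S : seq (segment R))
  (halpha : 0 < alpha <= pi / 2)
  (hnondeg : forall i : 'I_(size S), (S`_i).1 <> (S`_i).2)
  (hdistinct : forall i j : 'I_(size S), i != j -> ~ same_segment S`_i S`_j)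
  (hangle : forall i j : 'I_(size S),
      crosses S`_i S`_j -> crosses_at alpha S`_i S`_j) :
  exists S' : {set 'I_(size S)},
    (forall i j, i \in S' -> j \in S' -> ~ crosses S`_i S`_j) /\
    (size S <= 3 * #|S'|)%N.
Proof.
pose V (i : 'I_(size S)) := dir S`_i.
have V0 i : sqnorm (V i) != 0 := sqnorm_dir_neq0 (hnondeg i).
pose P := [rel i j | parallelv (V i) (V j)].
pose H := [rel i j | obliquev (cos alpha ^+ 2) (V i) (V j)].
have P_refl : reflexive P := fun i => parallelv_refl (V i).
have P_sym : symmetric P := fun i j => parallelv_sym (V i) (V j).
have P_trans : transitive P := fun j i l => parallelv_trans (V0 j).
have H_sym : symmetric H := fun i j => obliquev_sym _ (V i) (V j).
have H_nP i j : H i j -> ~~ P i j by case/andP.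
have H_classP i i' j : P i i' -> H i j -> H i' j := obliquev_parallel (V0 i) (V0 i').
have H_two_classes i a b c : H i a -> H i b -> H i c -> [|| P a b, P a c | P b c].
  exact: obliquev_three (cos_sqr_neq1 halpha) (V0 i).
have [S' [_ S'indep S'card]] :=
  greedy_independent P_refl P_sym P_trans H_sym H_nP H_classP H_two_classes [set: _].
exists S'; split; last by rewrite cardsT card_ord in S'card.
move=> i j iS' jS' /hangle /(crosses_at_obliquev halpha (hnondeg i) (hnondeg j)) Hij.
by have := S'indep i j iS' jS'; rewrite /= Hij.
Qed.
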